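(* Let $U\subset\mathbb{R}^n$ be a bounded domain with smooth boundary and let $(u_1,u_2)\in C(\overline U)^2$ be a viscosity solution of the system (S) in $U$. Then $u_1$ and $u_2$ are locally Lipschitz continuous in $U$.
   Context: For $\varphi\in C^2$ near $x$, set $\Delta_\infty\varphi(x)=|D\varphi(x)|^{-2}\sum_{k,l=1}^n\varphi_{x_k}\varphi_{x_l}\varphi_{x_kx_l}(x)$ when $D\varphi(x)\neq0$. Define $\Delta_\infty^+\varphi(x)=\Delta_\infty\varphi(x)$ if $D\varphi(x)\ne0$ and $\Delta_\infty^+\varphi(x)=\max\{D^2\varphi(x)v\cdot v: v\in\mathbb{S}^{n-1}\}$ if $D\varphi(x)=0$; define $\Delta_\infty^-\varphi(x)$ in the same way with $\min$ in place of $\max$. The system (S) on an open set $\Omega$ is: $-\Delta_\infty u_1+u_1-u_2=0$ and $-\Delta_\infty u_2+u_2-u_1=0$ in $\Omega$. A pair $(u_1,u_2)$ of upper semicontinuous functions on $\Omega$ is a viscosity subsolution of (S) in $\Omega$ if for each $i\in\{1,2\}$, $j=3-i$, and each $\varphi\in C^2(\Omega)$ such that $u_i-\varphi$ has a local maximum at $x_0\in\Omega$, one has $-\Delta_\infty^+\varphi(x_0)+u_i(x_0)-u_j(x_0)\le0$. A pair of lower semicontinuous functions on $\Omega$ is a viscosity supersolution if for each $i$, $j=3-i$, and each $\varphi\in C^2(\Omega)$ such that $u_i-\varphi$ has a local minimum at $x_0\in\Omega$, one has $-\Delta_\infty^-\varphi(x_0)+u_i(x_0)-u_j(x_0)\ge0$.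 A viscosity solution is a pair that is both a subsolution and a supersolution. *)

From mathcomp Require Import ssreflect ssrfun ssrbool eqtype ssrnat seq fintype bigop.
From Stdlib Require Import Reals.
Set Implicit Arguments. Unset Strict Implicit. Unset Printing Implicit Defensive.
Local Open Scope R_scope.

Definition point (n : nat) := 'I_n -> R.

Definition vadd n (x y : point n) : point n := fun i => x i + y i.
Definition vsub n (x y : point n) : point n := fun i => x i - y i.
Definition vscale n (t : R) (x : point n) : point n := fun i => t * x i.
Definition ebasis n (i : 'I_n) : point n := fun j => if j == i then 1 else 0.
Definition dot n (x y : point n) : R := \big[Rplus/0]_(i < n) (x i * y i).
Definition vnorm n (x : point n) : R := sqrt (dot x x).
Definition dist n (x y : point n) : R := vnorm (vsub x y).
Definition ball n (x0 : point n) (r : R) : point n -> Prop := fun y => dist y x0 < r.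

Definition is_open n (O : point n -> Prop) : Prop :=
  forall x, O x -> exists r, 0 < r /\ forall y, ball x r y -> O y.
Definition is_connected n (U : point n -> Prop) : Prop :=
  forall A B : point n -> Prop, is_open A -> is_open B ->
    (forall x, U x -> A x \/ B x) -> (forall x, U x -> ~ (A x /\ B x)) ->
    (forall x, U x -> A x) \/ (forall x, U x -> B x).
Definition is_domain n (U : point n -> Prop) : Prop :=
  (exists x, U x) /\ is_open U /\ is_connected U.
Definition is_bounded n (U : point n -> Prop) : Prop :=
  exists M, forall x, U x -> vnorm x <= M.
Definition closure n (U : point n -> Prop) : point n -> Prop :=
  fun x => forall r, 0 < r -> exists y, U y /\ dist y x < r.
Definition boundary n (U : point n -> Prop) : point n -> Prop :=
  fun x => closure U x /\ ~ U x.

Definition continuous_on n (S : point n -> Prop) (f : point n -> R) : Prop :=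
  forall x, S x -> forall eps, 0 < eps -> exists delta, 0 < delta /\
    forall y, S y -> dist y x < delta -> Rabs (f y - f x) < eps.
Definition usc_on n (S : point n -> Prop) (f : point n -> R) : Prop :=
  forall x, S x -> forall eps, 0 < eps -> exists delta, 0 < delta /\
    forall y, S y -> dist y x < delta -> f y < f x + eps.
Definition lsc_on n (S : point n -> Prop) (f : point n -> R) : Prop :=
  forall x, S x -> forall eps, 0 < eps -> exists delta, 0 < delta /\
    forall y, S y -> dist y x < delta -> f x - eps < f y.

Definition partial n (f : point n -> R) (i : 'I_n) (x : point n) (l : R) : Prop :=
  derivable_pt_lim (fun t => f (vadd x (vscale t (ebasis i)))) 0 l.

Fixpoint Ck n (k : nat) (O : point n -> Prop) (f : point n -> R) : Prop :=
  match k with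
  | O => continuous_on O f
  | S k' => continuous_on O f /\
      forall i : 'I_n, exists g : point n -> R,
        (forall x, O x -> partial f i x (g x)) /\ Ck k' O g
  end.

Definition C2_with n (O : point n -> Prop) (phi : point n -> R)
  (grad : 'I_n -> point n -> R) (hess : 'I_n -> 'I_n -> point n -> R) : Prop :=
  continuous_on O phi /\
  (forall i x, O x -> partial phi i x (grad i x)) /\
  (forall i, continuous_on O (grad i)) /\
  (forall k l x, O x -> partial (grad k) l x (hess k l x)) /\
  (forall k l, continuous_on O (hess k l)).

Definition smooth_boundary n (U : point n -> Prop) : Prop :=
  forall x0, boundary U x0 ->
    exists r, 0 < r /\ exists psi : point n -> R,
      (forall k, Ck k (ball x0 r) psi) /\
      (exists i l, partial psi i x0 l /\ l <> 0) /\
      (forall y, ball x0 r y -> (U y <-> psi y < 0)).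

Definition gradv n (grad : 'I_n -> point n -> R) (x : point n) : point n :=
  fun i => grad i x.
Definition quadH n (hess : 'I_n -> 'I_n -> point n -> R) (x v : point n) : R :=
  \big[Rplus/0]_(k < n) \big[Rplus/0]_(l < n) (hess k l x * v k * v l).

Definition is_max_quad n hess (x : point n) (m : R) : Prop :=
  (exists v, vnorm v = 1 /\ quadH hess x v = m) /\
  (forall v, vnorm v = 1 -> quadH hess x v <= m).
Definition is_min_quad n hess (x : point n) (m : R) : Prop :=
  (exists v, vnorm v = 1 /\ quadH hess x v = m) /\
  (forall v, vnorm v = 1 -> m <= quadH hess x v).

(* infinity Laplacian for D phi(x) <> 0 *)
Definition inf_lap n grad hess (x : point n) : R :=
  / (vnorm (gradv grad x))^2 * quadH hess x (gradv grad x).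

Definition inf_lap_plus n grad hess (x : point n) (m : R) : Prop :=
  (gradv grad x <> (fun _ => 0) /\ m = inf_lap grad hess x) \/
  (gradv grad x = (fun _ => 0) /\ is_max_quad hess x m).
Definition inf_lap_minus n grad hess (x : point n) (m : R) : Prop :=
  (gradv grad x <> (fun _ => 0) /\ m = inf_lap grad hess x) \/
  (gradv grad x = (fun _ => 0) /\ is_min_quad hess x m).

Definition other (i : bool) : bool := negb i.

Definition visc_sub n (O : point n -> Prop) (u : bool -> point n -> R) : Prop :=
  (forall i, usc_on O (u i)) /\
  forall (i : bool) phi grad hess x0, C2_with O phi grad hess -> O x0 ->
    (exists r, 0 < r /\ forall y, O y -> dist y x0 < r ->
        u i y - phi y <= u i x0 - phi x0) ->
    forall m, inf_lap_plus grad hess x0 m ->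
      - m + u i x0 - u (other i) x0 <= 0.

Definition visc_super n (O : point n -> Prop) (u : bool -> point n -> R) : Prop :=
  (forall i, lsc_on O (u i)) /\
  forall (i : bool) phi grad hess x0, C2_with O phi grad hess -> O x0 ->
    (exists r, 0 < r /\ forall y, O y -> dist y x0 < r ->
        u i x0 - phi x0 <= u i y - phi y) ->
    forall m, inf_lap_minus grad hess x0 m ->
      0 <= - m + u i x0 - u (other i) x0.

Definition visc_solution n (O : point n -> Prop) (u : bool -> point n -> R) : Prop :=
  visc_sub O u /\ visc_super O u.

Definition pair_fun n (u1 u2 : point n -> R) : bool -> point n -> R :=
  fun b => if b then u1 else u2.

Definition locally_lipschitz n (U : point n -> Prop) (f : point n -> R) : Prop :=
  forall x, U x -> exists r L, 0 < r /\
    forall y z, U y -> U z -> ball x r y -> ball x r z ->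
      Rabs (f y - f z) <= L * dist y z.

(* Each component u_i is a viscosity subsolution of -Δ∞ w <= u_j - u_i, and -u_i one of
   -Δ∞ w <= u_i - u_j; both right-hand sides are bounded on small balls.  Such a w is compared
   on a closed ball around z with the cones φ(y) = w(z) + a|y - z| - b|y - z|^2: a positive
   maximum of w - φ would sit at a point y ≠ z inside the ball, where Δ∞φ(y) = -2b, which the
   subsolution inequality forbids once 2b exceeds the right-hand side.  Taking a large compared
   with the oscillation of w gives w(y) - w(z) <= a|y - z|, and applying this to w and -w gives
   the Lipschitz bound.  As |y - z| is not C^2 at z, the cone is rebuilt from a C^2
   modification of sqrt near 0 that does not change it near the touching point. *)

From mathcomp Require Import ssreflect ssrfun ssrbool eqtype ssrnat seq fintype bigop.
From Stdlib Require Import Reals Lra FunctionalExtensionality.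
From mathcomp Require Import Rstruct.
From Pilot Require Import Defs.
Set Implicit Arguments. Unset Strict Implicit.
Local Open Scope R_scope.

Section Euclidean.
Variable n : nat.
Implicit Types x y z w : point n.

Lemma dot_ge0 x : 0 <= dot x x.
Proof.
apply: (big_ind (fun r => 0 <= r)) => [|a b|i _]; [lra|lra|nra].
Qed.

Lemma dotC x y : dot x y = dot y x.
Proof. by apply: eq_bigr => i _; ring. Qed.

Lemma dotDl x y w : dot (vadd x y) w = dot x w + dot y w.
Proof. by rewrite /dot -big_split; apply: eq_bigr => i _; rewrite /vadd /=; ring. Qed.

Lemma dotZl t x w : dot (vscale t x) w = t * dot x w.
Proof. by rewrite /dot big_distrr; apply: eq_bigr => i _; rewrite /vscale /=; ring. Qed.

Lemma dot_add_scale x y t : dot (vadd x (vscale t y)) (vadd x (vscale t y)) =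
  dot x x + 2 * t * dot x y + t ^ 2 * dot y y.
Proof. by rewrite !dotDl !dotZl !(dotC _ (vadd _ _)) !dotDl !dotZl (dotC y x); ring. Qed.

Lemma dot_ebasis x i : dot x (ebasis i) = x i.
Proof. by rewrite /dot (bigD1 i) //= /ebasis eqxx big1 => [|j /negbTE ->]; ring. Qed.

Lemma cauchy_schwarz x y : dot x y ^ 2 <= dot x x * dot y y.
Proof.
have quad_ge0 t : 0 <= dot x x + 2 * t * dot x y + t ^ 2 * dot y y.
  by rewrite -dot_add_scale; exact: dot_ge0.
have := dot_ge0 y; case: (Req_dec (dot y y) 0) => [y0 _ | y0 y_ge0].
- case: (Req_dec (dot x y) 0) => [-> | xy0]; first by rewrite y0; nra.
  set t := - (dot x x + 1) / (2 * dot x y).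
  have : dot x x + 2 * t * dot x y + t ^ 2 * dot y y = -1 by rewrite /t y0; field.
  have := quad_ge0 t; lra.
- have := quad_ge0 (- dot x y / dot y y).
  have -> : dot x x + 2 * (- dot x y / dot y y) * dot x y + (- dot x y / dot y y) ^ 2 * dot y y
    = (dot x x * dot y y - dot x y ^ 2) / dot y y by field.
  move=> h; have : 0 <= (dot x x * dot y y - dot x y ^ 2) / dot y y * dot y y by nra.
  have -> : (dot x x * dot y y - dot x y ^ 2) / dot y y * dot y y =
    dot x x * dot y y - dot x y ^ 2 by field.
  lra.
Qed.

Lemma vnorm_add_le x y : vnorm (vadd x y) <= vnorm x + vnorm y.
Proof.
have -> : vadd x y = vadd x (vscale 1 y).
  by apply: functional_extensionality => i; rewrite /vadd /vscale; ring.
rewrite /vnorm dot_add_scale -[X in _ <= X]sqrt_pow2; last first.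
  by have := sqrt_pos (dot x x); have := sqrt_pos (dot y y); lra.
apply: sqrt_le_1_alt.
set a := sqrt (dot x x); set b := sqrt (dot y y).
have sx : a * a = dot x x by exact: sqrt_sqrt (dot_ge0 x).
have sy : b * b = dot y y by exact: sqrt_sqrt (dot_ge0 y).
have [pa pb] : 0 <= a /\ 0 <= b by split; exact: sqrt_pos.
have xy_le : dot x y <= a * b.
  apply: Rnot_lt_le => lt; have := cauchy_schwarz x y; rewrite -sx -sy.
  have : 0 <= a * b by nra.
  nra.
have -> : (a + b) ^ 2 = a * a + 2 * (a * b) + b * b by ring.
rewrite sx sy; lra.
Qed.

Lemma distC x y : dist x y = dist y x.
Proof. by rewrite /dist /vnorm /dot; congr sqrt; apply: eq_bigr => i _; rewrite /vsub; ring. Qed.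

Lemma dist_xx x : dist x x = 0.
Proof. by rewrite /dist /vnorm /dot big1 ?sqrt_0 // => i _; rewrite /vsub; ring. Qed.

Lemma dist_ge0 x y : 0 <= dist x y.
Proof. exact: sqrt_pos. Qed.

Lemma dist_triangle x y z : dist x z <= dist x y + dist y z.
Proof.
rewrite /dist; have -> : vsub x z = vadd (vsub x y) (vsub y z).
  by apply: functional_extensionality => i; rewrite /vadd /vsub; ring.
exact: vnorm_add_le.
Qed.

Lemma Rabs_coord_le_dist x y i : Rabs (x i - y i) <= dist x y.
Proof.
rewrite /dist /vnorm -sqrt_Rsqr_abs; apply: sqrt_le_1_alt; rewrite /Rsqr /dot /vsub.
rewrite (bigD1 i) //=; set rest := \big[_/_]_(_ < _ | _) _.
suff : 0 <= rest by lra.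
by apply: (big_ind (fun r => 0 <= r)) => [|a b|j _]; [lra|lra|exact: Rle_0_sqr].
Qed.

Lemma dist_eq0 x y : dist x y = 0 -> x = y.
Proof.
move=> d0; apply: functional_extensionality => i.
have := Rabs_coord_le_dist x y i; rewrite d0.
have := Rle_abs (x i - y i); have := Rle_abs (- (x i - y i)); rewrite Rabs_Ropp; lra.
Qed.

Lemma dist_lt_of_coords_close eps : 0 < eps -> exists e, 0 < e /\
  forall x y, (forall i, Rabs (x i - y i) < e) -> dist x y < eps.
Proof.
move=> eps0; set N := \big[Rplus/0]_(i < n) 1.
have N0 : 0 <= N by apply: (big_ind (fun r => 0 <= r)) => *; lra.
set e := eps / (N + 1); have e0 : 0 < e by apply: Rdiv_lt_0_compat; lra.
exists e; split => // x y close.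
have dot_le : dot (vsub x y) (vsub x y) <= e * e * N.
  rewrite /N big_distrr; apply: (big_ind2 (fun a b => a <= b)) => [|a b c d /=|i _ /=]; [lra|lra|].
  have [lo hi] := Rabs_def2 _ _ (close i).
  rewrite /vsub Rmult_1_r; have : 0 < (e - (x i - y i)) * (e + (x i - y i)) by nra.
  nra.
have : e * e * N < eps * eps.
  have -> : e * e * N = eps * eps * (N / ((N + 1) * (N + 1))) by rewrite /e; field; lra.
  have q : N / ((N + 1) * (N + 1)) < 1.
    apply: (Rmult_lt_reg_r ((N + 1) * (N + 1))); first nra.
    have -> : N / ((N + 1) * (N + 1)) * ((N + 1) * (N + 1)) = N by field; lra.
    nra.
  have : 0 < eps * eps by nra.
  nra.
move=> lt; rewrite /dist /vnorm -(sqrt_square eps); last lra.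
apply: sqrt_lt_1_alt; split; [exact: dot_ge0 | lra].
Qed.

End Euclidean.

Definition continuous_at n (f : point n -> R) (x : point n) : Prop :=
  forall eps, 0 < eps -> exists d, 0 < d /\ forall y, dist y x < d -> Rabs (f y - f x) < eps.

Section Continuity.
Variable n : nat.
Implicit Types (f g : point n -> R) (x z : point n).

Lemma continuous_on_of_at (O : point n -> Prop) f :
  (forall x, O x -> continuous_at f x) -> continuous_on O f.
Proof.
move=> cf x Ox eps eps0; have [d [d0 close]] := cf x Ox eps eps0.
by exists d; split => // y _; exact: close.
Qed.

Lemma continuous_at_ext f g x : (forall y, f y = g y) -> continuous_at f x -> continuous_at g x.
Proof. by move=> fg; have -> : g = f by apply: functional_extensionality => y; rewrite fg. Qed.

Lemma continuous_at_const c x : continuous_at (fun _ => c) x.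
Proof. by move=> eps eps0; exists 1; split => [|y _]; rewrite ?Rminus_diag ?Rabs_R0; lra. Qed.

Lemma continuous_at_coord i x : continuous_at (fun y => y i) x.
Proof.
move=> eps eps0; exists eps; split => // y.
exact: Rle_lt_trans (Rabs_coord_le_dist y x i).
Qed.

Lemma continuous_at_dist z x : continuous_at (fun y => dist y z) x.
Proof.
move=> eps eps0; exists eps; split => // y yx.
have := dist_triangle y x z; have := dist_triangle x y z; rewrite (distC x y).
by move=> ? ?; apply: Rabs_def1; lra.
Qed.

Lemma continuous_at_comp (g : R -> R) f x :
  continuous_at f x -> continuity_pt g (f x) -> continuous_at (fun y => g (f y)) x.
Proof.
move=> cf cg eps eps0; have [d [d0 near_g]] := cg eps eps0.
have [e [e0 near_f]] := cf d d0; exists e; split => // y yx.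
case: (Req_dec (f y) (f x)) => [->|fyx]; first by rewrite Rminus_diag Rabs_R0.
exact: (near_g (f y) (conj (conj I (nesym fyx)) (near_f y yx))).
Qed.

Lemma continuous_at_add f g x :
  continuous_at f x -> continuous_at g x -> continuous_at (fun y => f y + g y) x.
Proof.
move=> cf cg eps eps0.
have [d1 [d1_0 near_f]] := cf (eps / 2) ltac:(lra).
have [d2 [d2_0 near_g]] := cg (eps / 2) ltac:(lra).
exists (Rmin d1 d2); split => [|y yx]; first exact: Rmin_glb_lt.
have := near_f y (Rlt_le_trans _ _ _ yx (Rmin_l _ _)).
have := near_g y (Rlt_le_trans _ _ _ yx (Rmin_r _ _)).
have -> : f y + g y - (f x + g x) = (f y - f x) + (g y - g x) by ring.
by move=> ? ?; apply: Rle_lt_trans (Rabs_triang _ _) _; lra.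
Qed.

Lemma continuous_at_scale a f x : continuous_at f x -> continuous_at (fun y => a * f y) x.
Proof.
move=> cf; apply: (@continuous_at_comp (fun s => a * s)) => //.
exact: (continuity_pt_scal id a _ (derivable_continuous_pt _ _ (derivable_pt_id (f x)))).
Qed.

Lemma continuous_at_sqr f x : continuous_at f x -> continuous_at (fun y => f y * f y) x.
Proof.
move=> cf; apply: (@continuous_at_comp (fun s => s * s)) => //.
have cid := derivable_continuous_pt _ _ (derivable_pt_id (f x)).
exact: (continuity_pt_mult id id).
Qed.

Lemma continuous_at_mul f g x :
  continuous_at f x -> continuous_at g x -> continuous_at (fun y => f y * g y) x.
Proof.
move=> cf cg.
apply: (@continuous_at_ext (fun y => /4 * ((f y + g y) * (f y + g y))
                               + - /4 * ((f y + -1 * g y) * (f y + -1 * g y)))).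
  by move=> y; field.
apply: continuous_at_add; apply: continuous_at_scale; apply: continuous_at_sqr;
  apply: continuous_at_add => //; exact: continuous_at_scale.
Qed.

Lemma continuous_on_add (K : point n -> Prop) f g :
  continuous_on K f -> continuous_on K g -> continuous_on K (fun y => f y + g y).
Proof.
move=> cf cg x Kx eps eps0.
have [d1 [d1_0 near_f]] := cf x Kx (eps / 2) ltac:(lra).
have [d2 [d2_0 near_g]] := cg x Kx (eps / 2) ltac:(lra).
exists (Rmin d1 d2); split => [|y Ky yx]; first exact: Rmin_glb_lt.
have := near_f y Ky (Rlt_le_trans _ _ _ yx (Rmin_l _ _)).
have := near_g y Ky (Rlt_le_trans _ _ _ yx (Rmin_r _ _)).
have -> : f y + g y - (f x + g x) = (f y - f x) + (g y - g x) by ring.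
by move=> ? ?; apply: Rle_lt_trans (Rabs_triang _ _) _; lra.
Qed.

Lemma continuous_on_opp (O : point n -> Prop) f :
  continuous_on O f -> continuous_on O (fun y => - f y).
Proof.
move=> cf x Ox eps eps0; have [d [d0 near]] := cf x Ox eps eps0.
exists d; split => // y Oy yx.
have -> : - f y - - f x = - (f y - f x) by ring.
by rewrite Rabs_Ropp; exact: near.
Qed.

Lemma continuous_on_sub (S S' : point n -> Prop) f : (forall y, S' y -> S y) ->
  continuous_on S f -> continuous_on S' f.
Proof.
move=> S'S cf x S'x eps eps0; have [d [d0 near]] := cf x (S'S x S'x) eps eps0.
by exists d; split => // y S'y; exact: near (S'S y S'y).
Qed.

End Continuity.

Lemma derivable_pt_lim_ext f g x l l' : (forall t, f t = g t) -> l = l' ->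
  derivable_pt_lim f x l -> derivable_pt_lim g x l'.
Proof. by move=> fg <-; have -> : g = f by apply: functional_extensionality => t; rewrite fg. Qed.

Lemma derivable_pt_lim_local f g x l r : 0 < r ->
  (forall t, Rabs (t - x) < r -> f t = g t) ->
  derivable_pt_lim g x l -> derivable_pt_lim f x l.
Proof.
move=> r0 fg dg eps eps0; have [d near] := dg eps eps0.
have dr0 : 0 < Rmin d r by apply: Rmin_glb_lt => //; exact: cond_pos.
exists (mkposreal _ dr0) => h h0 /= hdr.
have [hd hr] : Rabs h < d /\ Rabs h < r.
  by split; apply: Rlt_le_trans hdr _; [exact: Rmin_l | exact: Rmin_r].
rewrite !fg; [exact: near | by rewrite Rminus_diag Rabs_R0 | by rewrite Rplus_minus_l].
Qed.

Lemma derivable_pt_lim_quadratic a b c x :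
  derivable_pt_lim (fun s => a * s * s + b * s + c) x (2 * a * x + b).
Proof.
have := derivable_pt_lim_plus _ _ x _ _
  (derivable_pt_lim_scal _ a x _ (derivable_pt_lim_mult id id x _ _
     (derivable_pt_lim_id x) (derivable_pt_lim_id x)))
  (derivable_pt_lim_plus _ _ x _ _ (derivable_pt_lim_scal id b x _ (derivable_pt_lim_id x))
     (derivable_pt_lim_const c x)).
apply: derivable_pt_lim_ext => [s|]; rewrite /plus_fct /mult_real_fct /mult_fct /fct_cte /id; ring.
Qed.

Lemma derivable_pt_lim_affine_comp (H : R -> R) A a b x l : derivable_pt_lim H x l ->
  derivable_pt_lim (fun s => A + a * H s + b * s) x (a * l + b).
Proof.
move=> dH; have := derivable_pt_lim_plus _ _ x _ _
  (derivable_pt_lim_plus _ _ x _ _ (derivable_pt_lim_const A x) (derivable_pt_lim_scal _ a x _ dH))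
  (derivable_pt_lim_scal id b x _ (derivable_pt_lim_id x)).
apply: derivable_pt_lim_ext => [s|]; rewrite /plus_fct /mult_real_fct /fct_cte /id; ring.
Qed.

Lemma continuity_pt_Rmax d x : continuity_pt (Rmax d) x.
Proof.
move=> eps eps0; exists eps; split => // t [_]; rewrite /R_dist /Rmax.
by case: Rle_dec; case: Rle_dec => ? ? tx; have := Rabs_def2 _ _ tx;
  move=> [? ?]; apply: Rabs_def1; lra.
Qed.

Definition glue (d : R) (h1 h2 : R -> R) (t : R) : R := if Rle_dec d t then h2 t else h1 t.

Lemma glue_l d h1 h2 t : t < d -> glue d h1 h2 t = h1 t.
Proof. by rewrite /glue; case: Rle_dec => // ? ?; lra. Qed.

Lemma glue_r d h1 h2 t : d <= t -> glue d h1 h2 t = h2 t.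
Proof. by rewrite /glue; case: Rle_dec. Qed.

Lemma derivable_pt_lim_glue d h1 h2 x l :
  (x < d -> derivable_pt_lim h1 x l) -> (d < x -> derivable_pt_lim h2 x l) ->
  (x = d -> derivable_pt_lim h1 d l /\ derivable_pt_lim h2 d l /\ h1 d = h2 d) ->
  derivable_pt_lim (glue d h1 h2) x l.
Proof.
move=> d1 d2 dd; case: (Rtotal_order x d) => [xd|[xd|xd]].
- apply: (@derivable_pt_lim_local _ h1 _ _ (d - x)); [lra| |exact: d1].
  by move=> t /Rabs_def2 [? ?]; rewrite glue_l //; lra.
- subst x; have [{}d1 [{}d2 h12]] := dd erefl.
  move=> eps eps0; have [a near1] := d1 eps eps0; have [b near2] := d2 eps eps0.
  have ab0 : 0 < Rmin a b by apply: Rmin_glb_lt; exact: cond_pos.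
  exists (mkposreal _ ab0) => h h0 /= hab.
  have [ha hb] : Rabs h < a /\ Rabs h < b.
    by split; apply: Rlt_le_trans hab _; [exact: Rmin_l | exact: Rmin_r].
  rewrite (glue_r _ _ (Rle_refl d)); case: (Rle_or_lt d (d + h)) => side.
  + by rewrite glue_r //; exact: near2.
  + by rewrite glue_l // -h12; exact: near1.
- apply: (@derivable_pt_lim_local _ h2 _ _ (x - d)); [lra| |exact: d2].
  by move=> t /Rabs_def2 [? ?]; rewrite glue_r //; lra.
Qed.

Lemma derivable_pt_lim_inv_2sqrt s : 0 < s ->
  derivable_pt_lim (fun t => / (2 * sqrt t)) s (- / (4 * s * sqrt s)).
Proof.
move=> s0; have ss0 : 0 < sqrt s by exact: sqrt_lt_R0.
have := derivable_pt_lim_div (fct_cte 1) (mult_real_fct 2 sqrt) s _ _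
  (derivable_pt_lim_const 1 s) (derivable_pt_lim_scal sqrt 2 s _ (derivable_pt_lim_sqrt s s0))
  ltac:(rewrite /mult_real_fct; lra).
apply: derivable_pt_lim_ext => [t|]; rewrite /div_fct /fct_cte /mult_real_fct /Rdiv /Rsqr.
  ring.
have ss := sqrt_sqrt s (Rlt_le _ _ s0); set r := sqrt s in ss ss0 *.
by rewrite -ss; field; lra.
Qed.

Section SmoothSqrt.
Variable d : R.
Hypothesis d_gt0 : 0 < d.

(* On [d, +oo) this is sqrt; below d it is the second-order Taylor polynomial
   of sqrt at d, so the two pieces glue to a C^2 function on R. *)
Definition sqrt_taylor (s : R) : R :=
  sqrt d + (s - d) / (2 * sqrt d) - (s - d) * (s - d) / (8 * d * sqrt d).
Definition sqrt_taylor' (s : R) : R := / (2 * sqrt d) - (s - d) / (4 * d * sqrt d).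
Definition smooth_sqrt : R -> R := glue d sqrt_taylor sqrt.
Definition smooth_sqrt' : R -> R := glue d sqrt_taylor' (fun s => / (2 * sqrt s)).
Definition smooth_sqrt'' (s : R) : R := - / (4 * Rmax d s * sqrt (Rmax d s)).

Let sqrt_d_gt0 : 0 < sqrt d. Proof. exact: sqrt_lt_R0. Qed.

Lemma smooth_sqrtE s : d <= s -> smooth_sqrt s = sqrt s.
Proof. exact: glue_r. Qed.

Lemma smooth_sqrt'E s : d <= s -> smooth_sqrt' s = / (2 * sqrt s).
Proof. exact: glue_r. Qed.

Lemma smooth_sqrt''E s : d <= s -> smooth_sqrt'' s = - / (4 * s * sqrt s).
Proof. by move=> ds; rewrite /smooth_sqrt'' Rmax_right. Qed.

Lemma derivable_pt_lim_smooth_sqrt s : derivable_pt_lim smooth_sqrt s (smooth_sqrt' s).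
Proof.
have taylor t : derivable_pt_lim sqrt_taylor t (sqrt_taylor' t).
  have := derivable_pt_lim_quadratic (- / (8 * d * sqrt d))
    (/ (2 * sqrt d) + 2 * d / (8 * d * sqrt d))
    (sqrt d - d / (2 * sqrt d) - d * d / (8 * d * sqrt d)) t.
  apply: derivable_pt_lim_ext => [u|]; rewrite /sqrt_taylor /sqrt_taylor'; field; lra.
apply: derivable_pt_lim_glue => [xd|dx|->].
- by rewrite /smooth_sqrt' glue_l //; exact: taylor.
- by rewrite smooth_sqrt'E; [apply: derivable_pt_lim_sqrt|]; lra.
- rewrite smooth_sqrt'E; last lra; split; last split.
  + by have <- : sqrt_taylor' d = / (2 * sqrt d) by rewrite /sqrt_taylor'; field; lra.
  + exact: derivable_pt_lim_sqrt.
  + by rewrite /sqrt_taylor; field; lra.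
Qed.

Lemma derivable_pt_lim_smooth_sqrt' s : derivable_pt_lim smooth_sqrt' s (smooth_sqrt'' s).
Proof.
have taylor t : derivable_pt_lim sqrt_taylor' t (- / (4 * d * sqrt d)).
  have := derivable_pt_lim_quadratic 0 (- / (4 * d * sqrt d))
    (/ (2 * sqrt d) + d / (4 * d * sqrt d)) t.
  apply: derivable_pt_lim_ext => [u|]; rewrite /sqrt_taylor'; field; lra.
apply: derivable_pt_lim_glue => [xd|dx|->].
- by rewrite /smooth_sqrt'' Rmax_left; [exact: taylor | lra].
- by rewrite smooth_sqrt''E; [apply: derivable_pt_lim_inv_2sqrt|]; lra.
- rewrite smooth_sqrt''E; last lra; split; last split.
  + exact: taylor.
  + exact: derivable_pt_lim_inv_2sqrt.
  + by rewrite /sqrt_taylor'; field; lra.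
Qed.

Lemma continuity_pt_smooth_sqrt'' s : continuity_pt smooth_sqrt'' s.
Proof.
have m0 : 0 < Rmax d s by apply: Rlt_le_trans (Rmax_l d s).
apply: (continuity_pt_comp (Rmax d) (fun t => - / (4 * t * sqrt t)));
  first exact: continuity_pt_Rmax.
have -> : (fun t => - / (4 * t * sqrt t)) = (- / ((fct_cte 4 * id) * sqrt))%F.
  by apply: functional_extensionality => t; rewrite /opp_fct /inv_fct /mult_fct /fct_cte.
apply: continuity_pt_opp; apply: continuity_pt_inv.
- apply: continuity_pt_mult; last by apply: continuity_pt_sqrt; lra.
  apply: continuity_pt_mult; first exact: continuity_pt_const.
  exact: derivable_continuous_pt (derivable_pt_id _).
- by rewrite /mult_fct /fct_cte /id; have := sqrt_lt_R0 _ m0; nra.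
Qed.

End SmoothSqrt.

Section Radial.
Variables (n : nat) (z : point n).
Variables F F' F'' : R -> R.
Hypothesis F_F' : forall s, derivable_pt_lim F s (F' s).
Hypothesis F'_F'' : forall s, derivable_pt_lim F' s (F'' s).
Hypothesis F''_cont : forall s, continuity_pt F'' s.

Definition sqdist (y : point n) : R := dot (vsub y z) (vsub y z).
Definition radial (y : point n) : R := F (sqdist y).
Definition radial_grad (k : 'I_n) (y : point n) : R := F' (sqdist y) * (2 * (y k - z k)).
Definition radial_hess (k l : 'I_n) (y : point n) : R :=
  F'' (sqdist y) * (2 * (y l - z l)) * (2 * (y k - z k))
  + F' (sqdist y) * (if k == l then 2 else 0).

Lemma sqdistE y : sqdist y = dist y z * dist y z.
Proof. by rewrite /dist /vnorm sqrt_sqrt //; exact: dot_ge0. Qed.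

Lemma sqdist_line x i t :
  sqdist (vadd x (vscale t (ebasis i))) = 1 * t * t + 2 * (x i - z i) * t + sqdist x.
Proof.
rewrite /sqdist.
have -> : vsub (vadd x (vscale t (ebasis i))) z = vadd (vsub x z) (vscale t (ebasis i)).
  by apply: functional_extensionality => j; rewrite /vsub /vadd /vscale; ring.
by rewrite dot_add_scale !dot_ebasis /ebasis eqxx /vsub; ring.
Qed.

Lemma partial_comp_sqdist (H H' : R -> R) i x :
  (forall s, derivable_pt_lim H s (H' s)) ->
  partial (fun y => H (sqdist y)) i x (H' (sqdist x) * (2 * (x i - z i))).
Proof.
move=> dH; have := derivable_pt_lim_comp _ _ _ _ _
  (derivable_pt_lim_quadratic 1 (2 * (x i - z i)) (sqdist x) 0) (dH _).
apply: derivable_pt_lim_ext => [t|]; first by rewrite /comp sqdist_line.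
have -> : 1 * 0 * 0 + 2 * (x i - z i) * 0 + sqdist x = sqdist x by ring.
ring.
Qed.

Lemma partial_radial i x : partial radial i x (radial_grad i x).
Proof. exact: partial_comp_sqdist. Qed.

Lemma partial_radial_grad k l x : partial (radial_grad k) l x (radial_hess k l x).
Proof.
have coord : derivable_pt_lim (fun t => 2 * (vadd x (vscale t (ebasis l)) k - z k)) 0
    (2 * (if k == l then 1 else 0)).
  have := derivable_pt_lim_quadratic 0 (2 * (if k == l then 1 else 0)) (2 * (x k - z k)) 0.
  by apply: derivable_pt_lim_ext => [t|]; rewrite /vadd /vscale /ebasis; ring.
have := derivable_pt_lim_mult _ _ _ _ _ (partial_comp_sqdist l x F'_F'') coord.
apply: derivable_pt_lim_ext => [t|]; first by rewrite /mult_fct /radial_grad.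
have -> : vadd x (vscale 0 (ebasis l)) = x.
  by apply: functional_extensionality => j; rewrite /vadd /vscale; ring.
by rewrite /radial_hess; case: eqP => _; ring.
Qed.

Lemma continuous_at_comp_sqdist (H : R -> R) x :
  (forall s, continuity_pt H s) -> continuous_at (fun y => H (sqdist y)) x.
Proof.
move=> cH; apply: continuous_at_comp => //.
apply: (continuous_at_ext (fun y => esym (sqdistE y))).
apply: continuous_at_sqr; exact: continuous_at_dist.
Qed.

Lemma continuous_at_coord_diff k x : continuous_at (fun y => 2 * (y k - z k)) x.
Proof.
apply: continuous_at_scale; apply: (@continuous_at_ext _ (fun y => y k + (-1) * z k)).
  by move=> y; ring.
apply: continuous_at_add; [exact: continuous_at_coord | exact: continuous_at_const].
Qed.

Lemma radial_C2_with (O : point n -> Prop) : C2_with O radial radial_grad radial_hess.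
Proof.
have cont' y : continuous_at (fun y => F' (sqdist y)) y.
  by apply: continuous_at_comp_sqdist => s; exact: derivable_continuous_pt (exist _ _ (F'_F'' s)).
split; [|split; [|split; [|split]]].
- apply: continuous_on_of_at => x _; apply: continuous_at_comp_sqdist => s.
  exact: derivable_continuous_pt (exist _ _ (F_F' s)).
- by move=> i x _; exact: partial_radial.
- move=> i; apply: continuous_on_of_at => x _.
  by apply: continuous_at_mul => //; exact: continuous_at_coord_diff.
- by move=> k l x _; exact: partial_radial_grad.
- move=> k l; apply: continuous_on_of_at => x _; apply: continuous_at_add.
  + do 2 (apply: continuous_at_mul; last exact: continuous_at_coord_diff).
    exact: continuous_at_comp_sqdist.
  + by apply: continuous_at_mul => //; exact: continuous_at_const.
Qed.

Lemma radial_inf_lap x : sqdist x <> 0 -> F' (sqdist x) <> 0 ->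
  gradv radial_grad x <> (fun _ => 0) /\
  inf_lap radial_grad radial_hess x = 4 * F'' (sqdist x) * sqdist x + 2 * F' (sqdist x).
Proof.
set s := sqdist x => s0 F's0.
have sE : s = \big[Rplus/0]_(k < n) ((x k - z k) * (x k - z k)) by [].
have grad_sq : dot (gradv radial_grad x) (gradv radial_grad x) = 4 * F' s * F' s * s.
  by rewrite [X in _ * X]sE big_distrr; apply: eq_bigr => k _; rewrite /gradv /radial_grad -/s /=; ring.
split.
- move=> grad0; apply: s0; have := grad_sq; rewrite grad0 /dot big1 => [|k _]; last ring.
  by move=> h; apply: (Rmult_eq_reg_l (4 * F' s * F' s)); [lra | nra].
- have quad : quadH radial_hess x (gradv radial_grad x) =
      16 * F'' s * F' s * F' s * s * s + 8 * F' s * F' s * F' s * s.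
    rewrite /quadH (eq_bigr (fun k => 16 * F'' s * F' s * F' s * s * ((x k - z k) * (x k - z k))
        + 8 * F' s * F' s * F' s * ((x k - z k) * (x k - z k)))).
      by rewrite big_split /= -!big_distrr -sE /=; ring.
    move=> k _; rewrite (eq_bigr (fun l => 16 * F'' s * F' s * F' s * ((x k - z k) * (x k - z k))
        * ((x l - z l) * (x l - z l))
        + (if k == l then 8 * F' s * F' s * F' s * ((x k - z k) * (x k - z k)) else 0))).
      rewrite big_split /= -big_distrr -sE -big_mkcond /=.
      by rewrite (big_pred1 k) => [|l]; [ring | rewrite eq_sym].
    by move=> l _; rewrite /radial_hess /gradv /radial_grad -/s; case: eqP => [<-|_]; ring.
  rewrite /inf_lap quad /vnorm pow2_sqrt ?grad_sq; last by rewrite -grad_sq; exact: dot_ge0.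
  by field.
Qed.

End Radial.

Section Opposite.
Variable n : nat.
Implicit Types (O : point n -> Prop) (f phi : point n -> R).
Implicit Types (grad : 'I_n -> point n -> R) (hess : 'I_n -> 'I_n -> point n -> R).

Lemma partial_opp f i x l : partial f i x l -> partial (fun y => - f y) i x (- l).
Proof. by move/derivable_pt_lim_opp; apply: derivable_pt_lim_ext. Qed.

Lemma C2_with_opp O phi grad hess : C2_with O phi grad hess ->
  C2_with O (fun y => - phi y) (fun i y => - grad i y) (fun k l y => - hess k l y).
Proof.
move=> [c0 [d1 [c1 [d2 c2]]]]; split; [|split; [|split; [|split]]].
- exact: continuous_on_opp.
- by move=> i x Ox; apply: partial_opp; exact: d1.
- by move=> i; exact: continuous_on_opp.
- by move=> k l x Ox; apply: partial_opp; exact: d2.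
- by move=> k l; exact: continuous_on_opp.
Qed.

Lemma Rsum_opp (F : 'I_n -> R) : \big[Rplus/0]_(i < n) - F i = - (\big[Rplus/0]_(i < n) F i).
Proof.
have -> : - (\big[Rplus/0]_(i < n) F i) = -1 * \big[Rplus/0]_(i < n) F i by ring.
by rewrite big_distrr; apply: eq_bigr => i _ /=; ring.
Qed.

Lemma quadH_opp hess x v : quadH (fun k l y => - hess k l y) x v = - quadH hess x v.
Proof.
rewrite /quadH -Rsum_opp; apply: eq_bigr => k _; rewrite -Rsum_opp.
by apply: eq_bigr => l _; ring.
Qed.

Lemma quadH_vopp hess x v : quadH hess x (fun i => - v i) = quadH hess x v.
Proof. by apply: eq_bigr => k _; apply: eq_bigr => l _; ring. Qed.

Lemma inf_lap_plus_opp grad hess x m : inf_lap_plus grad hess x m ->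
  inf_lap_minus (fun i y => - grad i y) (fun k l y => - hess k l y) x (- m).
Proof.
have gradN : gradv (fun i y => - grad i y) x = fun i => - gradv grad x i by [].
case=> [[grad0 ->] | [grad0 [[v [v1 qv]] qmax]]]; [left | right]; split.
- rewrite gradN => h; apply: grad0; apply: functional_extensionality => i.
  by have := congr1 (fun g => g i) h => /= ?; lra.
- rewrite /inf_lap gradN quadH_opp quadH_vopp /vnorm.
  have -> : dot (fun i => - gradv grad x i) (fun i => - gradv grad x i) =
      dot (gradv grad x) (gradv grad x) by apply: eq_bigr => i _; ring.
  ring.
- by rewrite gradN grad0; apply: functional_extensionality => i; ring.
- split; first by exists v; split => //; rewrite quadH_opp qv.
  by move=> w w1; rewrite quadH_opp; have := qmax w w1; lra.
Qed.

End Opposite.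

Module ClosedBallMax.
From mathcomp Require Import all_boot all_order all_algebra.
From mathcomp Require Import all_classical all_reals all_analysis Rstruct_topology.
Import Order.TTheory GRing.Theory Num.Theory.
Import numFieldNormedType.Exports.
Local Open Scope classical_set_scope.

Section ClosedBall.
Variable n : nat.

Definition to_point (v : 'rV[R]_n) : Defs.point n := fun i => v ord0 i.
Definition of_point (p : Defs.point n) : 'rV[R]_n := \row_i p i.

Lemma to_of_point p : to_point (of_point p) = p.
Proof. by apply: functional_extensionality => i; rewrite /to_point mxE. Qed.

Lemma ball_to_point_dist_lt (v : 'rV[R]_n) (eps : R) : Rlt 0 eps -> exists e : R, Rlt 0 e /\
  forall w, ball v e w -> Rlt (Defs.dist (to_point w) (to_point v)) eps.
Proof.
move=> eps0; have [e [e0 close]] := dist_lt_of_coords_close n eps0.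
exists e; split => // w [_ vw]; apply: close => i.
have := vw ord0 i; rewrite /ball /= => /RltP; rewrite -RabsE /to_point => lt.
by rewrite -Rabs_Ropp Ropp_minus_distr.
Qed.

Lemma continuous_dist_to_point (z : Defs.point n) :
  continuous (fun v : 'rV[R]_n => (Defs.dist (to_point v) z : R^o)).
Proof.
move=> v; apply/(@pseudometric_normed_Zmodule.cvgrPdist_lt _ R^o _ (nbhs v) _ _ _).
move=> eps /RltP eps0; have [e [e0 near]] := ball_to_point_dist_lt v eps0.
apply/nbhs_ballP; exists e; first exact/RltP.
move=> w /near wv; have := dist_triangle (to_point w) (to_point v) z.
have := dist_triangle (to_point v) (to_point w) z; rewrite (distC (to_point v) (to_point w)).
by move=> ? ?; apply/RltP; rewrite -RabsE -RminusE; apply: Rabs_def1; lra.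
Qed.

Lemma compact_closed_ball (z : Defs.point n) (r : R) :
  compact [set v : 'rV[R]_n | Rle (Defs.dist (to_point v) z) r].
Proof.
pose box := [set v : 'rV[R]_n | forall i, `[z i - r, z i + r]%classic (v ord0 i)].
apply: (@subclosed_compact _ _ box).
- have -> : [set v : 'rV[R]_n | Rle (Defs.dist (to_point v) z) r] =
      (fun v : 'rV[R]_n => Defs.dist (to_point v) z) @^-1` [set x | x <= r]%R.
    by apply/seteqP; split => v /= H; apply/RleP.
  by apply: preimage_closed; [move=> v _; exact: continuous_dist_to_point | exact: closed_le].
- apply: (@rV_compact _ n (fun i => `[z i - r, z i + r]%classic)) => i.
  exact: segment_compact.
- move=> v /= vr i; rewrite /= in_itv /=; have := Rabs_coord_le_dist (to_point v) z i.
  have := Rle_abs (to_point v i - z i); have := Rle_abs (- (to_point v i - z i)).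
  by rewrite Rabs_Ropp /to_point in vr * => ? ? ?; apply/andP; split; apply/RleP; lra.
Qed.

Lemma closed_ball_max (z : Defs.point n) (r : R) (f : Defs.point n -> R) : Rle 0 r ->
  Defs.continuous_on (fun y => Rle (Defs.dist y z) r) f ->
  exists c, Rle (Defs.dist c z) r /\ forall y, Rle (Defs.dist y z) r -> Rle (f y) (f c).
Proof.
move=> r0 cf; set K := [set v : 'rV[R]_n | Rle (Defs.dist (to_point v) z) r].
have K0 : K !=set0 by exists (of_point z); rewrite /K /= to_of_point dist_xx.
have cfK : {within K, continuous (f \o to_point)}.
  apply/subspace_continuousP => v Kv.
  apply/(@pseudometric_normed_Zmodule.cvgrPdist_lt _ R^o _ (within K (nbhs v)) _ _ _).
  move=> eps /RltP eps0; have [d [d0 near_f]] := cf (to_point v) Kv eps eps0.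
  have [e [e0 near]] := ball_to_point_dist_lt v d0.
  apply/nbhs_ballP; exists e; first exact/RltP.
  move=> w /near wv Kw; change (`|f (to_point v) - f (to_point w)| < eps)%R.
  by apply/RltP; rewrite -RabsE -RminusE Rabs_minus_sym; exact: near_f.
have [c Kc cmax] := EVT_max_rV K0 (@compact_closed_ball z r) cfK.
exists (to_point c); split; first by move: Kc; rewrite inE.
move=> y yr; have := cmax (of_point y); rewrite /= to_of_point => le; apply/RleP; apply: le.
by rewrite inE /K /= to_of_point.
Qed.

End ClosedBall.

End ClosedBallMax.

Definition inf_lap_subsolution n (U : point n -> Prop) (u c : point n -> R) : Prop :=
  forall phi grad hess x, C2_with U phi grad hess -> U x ->
    (exists r, 0 < r /\ forall y, U y -> dist y x < r -> u y - phi y <= u x - phi x) ->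
    forall m, inf_lap_plus grad hess x m -> - m <= c x.

Lemma cone_test_function n (O : point n -> Prop) (z x : point n) (A a b d : R) :
  0 < d -> d < sqdist z x -> b < a / (2 * dist x z) ->
  exists phi grad hess, C2_with O phi grad hess /\
    (forall y, d <= sqdist z y -> phi y = A + a * dist y z - b * (dist y z * dist y z)) /\
    inf_lap_plus grad hess x (- 2 * b).
Proof.
move=> d0 dx ba; set s0 := sqdist z x in dx.
have s0_sqrt : sqrt s0 = dist x z by [].
have s0_gt0 : 0 < sqrt s0 by apply: sqrt_lt_R0; lra.
pose F s := A + a * smooth_sqrt d s + (- b) * s.
pose F' s := - b + a * smooth_sqrt' d s + 0 * s.
pose F'' s := a * smooth_sqrt'' d s.
have F_F' s : derivable_pt_lim F s (F' s).
  apply: derivable_pt_lim_ext (derivable_pt_lim_affine_comp A a (- b)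
    (derivable_pt_lim_smooth_sqrt d0 s)) => //; rewrite /F'; ring.
have F'_F'' s : derivable_pt_lim F' s (F'' s).
  apply: derivable_pt_lim_ext (derivable_pt_lim_affine_comp (- b) a 0
    (derivable_pt_lim_smooth_sqrt' d0 s)) => //; rewrite /F''; ring.
have F''_cont s : continuity_pt F'' s.
  exact: (continuity_pt_scal _ a _ (continuity_pt_smooth_sqrt'' d0 s)).
have F's0 : F' s0 = - b + a / (2 * dist x z).
  by rewrite /F' smooth_sqrt'E -?s0_sqrt; [rewrite /Rdiv; ring | lra].
exists (radial z F), (radial_grad z F'), (radial_hess z F' F''); split; last split.
- exact: radial_C2_with.
- by move=> y dy; rewrite /radial /F smooth_sqrtE // sqdistE sqrt_square; [ring | exact: dist_ge0].
- have [grad0 infl] := @radial_inf_lap n z F' F'' x ltac:(rewrite -/s0; lra)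
    ltac:(rewrite -/s0 F's0; lra).
  left; split => //; rewrite infl -/s0 F's0 /F'' smooth_sqrt''E -?s0_sqrt; last lra.
  have ss := sqrt_sqrt s0 ltac:(lra); set t := sqrt s0 in ss s0_gt0 *.
  by rewrite -ss; field; lra.
Qed.

Lemma cone_comparison n (U : point n -> Prop) (u c : point n -> R) (z : point n) (r b M : R) :
  0 < r -> 0 < M -> 0 <= b ->
  (forall y, dist y z <= r -> U y) -> continuous_on (fun y => dist y z <= r) u ->
  (forall y, dist y z <= r -> u y - u z <= M) -> (forall y, dist y z <= r -> c y < 2 * b) ->
  inf_lap_subsolution U u c ->
  forall y, dist y z <= r -> u y - u z <= (M / r + 2 * b * r) * dist y z.
Proof.
move=> r0 M0 b0 KU cu osc cb sub.
set a := M / r + 2 * b * r.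
have a_r : a * r = M + 2 * b * r * r by rewrite /a; field; lra.
have a0 : 0 < a by have := Rdiv_lt_0_compat _ _ M0 r0; rewrite /a; nra.
pose w y := u y + (- u z + - a * dist y z + b * (dist y z * dist y z)).
have cw : continuous_on (fun y => dist y z <= r) w.
  apply: continuous_on_add => //; apply: continuous_on_of_at => x _.
  apply: continuous_at_add; first apply: continuous_at_add.
  - exact: continuous_at_const.
  - by apply: continuous_at_scale; exact: continuous_at_dist.
  - by apply: continuous_at_scale; apply: continuous_at_sqr; exact: continuous_at_dist.
have [x [xr wmax]] := ClosedBallMax.closed_ball_max (Rlt_le _ _ r0) cw.
case: (Rle_or_lt (w x) 0) => [wx_le0 y yr | wx_gt0].
  have : 0 <= b * (dist y z * dist y z) by apply: Rmult_le_pos => //; exact: Rle_0_sqr.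
  by have := wmax y yr; rewrite /w in wx_le0 *; lra.
exfalso; have := dist_ge0 x z => x_ge0.
have xz_gt0 : 0 < dist x z.
  case: (Rle_lt_or_eq_dec _ _ x_ge0) => // /esym xz0; move: wx_gt0.
  by rewrite /w xz0 (dist_eq0 xz0); lra.
have xz_lt_r : dist x z < r.
  case: (Rle_lt_or_eq_dec _ _ xr) => // xz_r; move: wx_gt0.
  have := osc x xr; rewrite /w xz_r; nra.
set d := sqdist z x / 2.
have s0E : sqdist z x = dist x z * dist x z by exact: sqdistE.
have s0_gt0 : 0 < sqdist z x by rewrite s0E; nra.
have d0 : 0 < d by rewrite /d; lra.
have slope : b < a / (2 * dist x z).
  have : a / (2 * r) < a / (2 * dist x z).
    by apply: Rmult_lt_compat_l; [lra | apply: Rinv_lt_contravar; nra].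
  have -> : a / (2 * r) = M / (2 * (r * r)) + b by rewrite /a; field; lra.
  have : 0 < M / (2 * (r * r)) by apply: Rdiv_lt_0_compat; nra.
  lra.
have [phi [grad [hess [C2 [phiE lap]]]]] :=
  @cone_test_function n U z x (u z) a b d d0 ltac:(rewrite /d; lra) slope.
have sqrt_d : sqrt d < dist x z.
  rewrite -(sqrt_square (dist x z)) // -s0E; apply: sqrt_lt_1_alt; rewrite /d; lra.
have u_phi_max : exists e, 0 < e /\ forall y, U y -> dist y x < e -> u y - phi y <= u x - phi x.
  exists (Rmin (r - dist x z) (dist x z - sqrt d)); split; first by apply: Rmin_glb_lt; lra.
  move=> y _ yx; have [yx1 yx2] : dist y x < r - dist x z /\ dist y x < dist x z - sqrt d.
    by split; apply: Rlt_le_trans yx _; [exact: Rmin_l | exact: Rmin_r].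
  have := dist_triangle y x z; have := dist_triangle x y z; rewrite (distC x y) => ? ?.
  have yr : dist y z <= r by lra.
  have dy : d <= sqdist z y.
    rewrite sqdistE; have := sqrt_pos d; have := sqrt_sqrt d (Rlt_le _ _ d0); nra.
  rewrite !phiE //; last by rewrite /d; lra.
  by have := wmax y yr; rewrite /w; lra.
have := sub phi grad hess x C2 (KU x xr) u_phi_max _ lap; have := cb x xr; lra.
Qed.

Definition locally_bounded_above n (U : point n -> Prop) (c : point n -> R) : Prop :=
  forall x, U x -> exists r B, 0 < r /\ forall y, U y -> dist y x < r -> c y <= B.

Lemma continuous_on_locally_bounded_above n (U : point n -> Prop) c :
  continuous_on U c -> locally_bounded_above U c.
Proof.
move=> cc x Ux; have [d [d0 near]] := cc x Ux 1 Rlt_0_1.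
exists d, (c x + 1); split => // y Uy yx.
by have := near y Uy yx; have := Rle_abs (c y - c x); lra.
Qed.

Lemma locally_lipschitz_of_subsolutions n (U : point n -> Prop) (u c c' : point n -> R) :
  is_open U -> continuous_on U u ->
  locally_bounded_above U c -> locally_bounded_above U c' ->
  inf_lap_subsolution U u c -> inf_lap_subsolution U (fun y => - u y) c' ->
  locally_lipschitz U u.
Proof.
move=> Uo cu bc bc' sub sub' x0 Ux0.
have [r1 [r1_0 ballU]] := Uo x0 Ux0.
have [r2 [r2_0 near_u]] := cu x0 Ux0 1 Rlt_0_1.
have [r3 [B [r3_0 cB]]] := bc x0 Ux0.
have [r4 [B' [r4_0 cB']]] := bc' x0 Ux0.
set rho := Rmin (Rmin r1 r2) (Rmin r3 r4) / 4.
have [rho0 rho_le] : 0 < rho /\ 4 * rho <= r1 /\ 4 * rho <= r2 /\ 4 * rho <= r3 /\ 4 * rho <= r4.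
  have := Rmin_l r1 r2; have := Rmin_r r1 r2; have := Rmin_l r3 r4; have := Rmin_r r3 r4.
  have := Rmin_l (Rmin r1 r2) (Rmin r3 r4); have := Rmin_r (Rmin r1 r2) (Rmin r3 r4).
  have : 0 < Rmin (Rmin r1 r2) (Rmin r3 r4) by do 2?apply: Rmin_glb_lt.
  by rewrite /rho; lra.
set b := Rabs B + Rabs B' + 1.
have [Bb B'b] : B < 2 * b /\ B' < 2 * b.
  by rewrite /b; have := Rle_abs B; have := Rle_abs B'; have := Rabs_pos B; have := Rabs_pos B'; lra.
exists rho, (2 / (2 * rho) + 2 * b * (2 * rho)); split => // y z Uy Uz yx0 zx0.
rewrite /ball in yx0 zx0.
have near_x0 w : dist w z <= 2 * rho -> U w /\ dist w x0 < 4 * rho.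
  move=> wz; have := dist_triangle w z x0 => ?.
  by split; [apply: ballU; rewrite /ball |]; lra.
have yz : dist y z <= 2 * rho by have := dist_triangle y x0 z; rewrite (distC x0 z); lra.
have zz : dist z z <= 2 * rho by rewrite dist_xx; lra.
have osc w : dist w z <= 2 * rho -> Rabs (u w - u z) < 2.
  move=> wz; have [Uw wx0] := near_x0 w wz; have [_ zx0'] := near_x0 z zz.
  have := near_u w Uw ltac:(lra); have := near_u z Uz ltac:(lra).
  have -> : u w - u z = (u w - u x0) - (u z - u x0) by ring.
  by move=> ? ?; apply: Rle_lt_trans (Rabs_triang _ _) _; rewrite Rabs_Ropp; lra.
have cuK : continuous_on (fun w => dist w z <= 2 * rho) u.
  by apply: continuous_on_sub cu => w /near_x0 [].
have KU w : dist w z <= 2 * rho -> U w by move/near_x0 => [].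
have K_osc w : dist w z <= 2 * rho -> u w - u z <= 2 /\ - u w - - u z <= 2.
  by move/osc; have := Rle_abs (u w - u z); have := Rle_abs (- (u w - u z)); rewrite Rabs_Ropp; lra.
have K_c w : dist w z <= 2 * rho -> c w < 2 * b /\ c' w < 2 * b.
  by move/near_x0 => [Uw wx0]; have := cB w Uw ltac:(lra); have := cB' w Uw ltac:(lra); lra.
have [rho2_0 b0] : 0 < 2 * rho /\ 0 <= b by rewrite /b; have := Rabs_pos B; have := Rabs_pos B'; lra.
have up := @cone_comparison n U u c z (2 * rho) b 2 rho2_0 Rlt_0_2 b0 KU cuK
  (fun w wz => proj1 (K_osc w wz)) (fun w wz => proj1 (K_c w wz)) sub y yz.
have down := @cone_comparison n U (fun w => - u w) c' z (2 * rho) b 2 rho2_0 Rlt_0_2 b0 KU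
  (continuous_on_opp cuK) (fun w wz => proj2 (K_osc w wz)) (fun w wz => proj2 (K_c w wz)) sub' y yz.
by apply: Rabs_le; lra.
Qed.

Section ViscositySystem.
Variables (n : nat) (U : point n -> Prop) (u : bool -> point n -> R).

Lemma visc_sub_inf_lap_subsolution i : visc_sub U u ->
  inf_lap_subsolution U (u i) (fun y => u (other i) y - u i y).
Proof.
move=> [_ sub] phi grad hess x C2 Ux touch m lap.
by have := sub i phi grad hess x C2 Ux touch m lap; lra.
Qed.

(* A supersolution touched from below by phi is minus a subsolution touched from above by -phi. *)
Lemma visc_super_inf_lap_subsolution_opp i : visc_super U u ->
  inf_lap_subsolution U (fun y => - u i y) (fun y => u i y - u (other i) y).
Proof.
move=> [_ super] phi grad hess x C2 Ux [r [r0 touch]] m lap.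
have touch' : exists r, 0 < r /\ forall y, U y -> dist y x < r ->
    u i x - - phi x <= u i y - - phi y.
  by exists r; split => // y Uy yx; have := touch y Uy yx; lra.
have := super i _ _ _ x (C2_with_opp C2) Ux touch' _ (inf_lap_plus_opp lap); lra.
Qed.

Lemma visc_solution_locally_lipschitz i : is_open U -> (forall j, continuous_on U (u j)) ->
  visc_solution U u -> locally_lipschitz U (u i).
Proof.
move=> Uo cu [sub super].
have c_bounded (f g : point n -> R) : continuous_on U f -> continuous_on U g ->
    locally_bounded_above U (fun y => f y - g y).
  move=> cf cg; apply: continuous_on_locally_bounded_above.
  by apply: continuous_on_add => //; exact: continuous_on_opp.
apply: (locally_lipschitz_of_subsolutions Uo (cu i) (c_bounded _ _ (cu _) (cu _))
  (c_bounded _ _ (cu _) (cu _))).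
- exact: visc_sub_inf_lap_subsolution.
- exact: visc_super_inf_lap_subsolution_opp.
Qed.

End ViscositySystem.

Theorem mainTheorem9 (n : nat) (U : point n -> Prop) (u1 u2 : point n -> R) :
  is_domain U -> is_bounded U -> smooth_boundary U ->
  continuous_on (closure U) u1 -> continuous_on (closure U) u2 ->
  visc_solution U (pair_fun u1 u2) ->
  locally_lipschitz U u1 /\ locally_lipschitz U u2.
Proof.
move=> [_ [Uo _]] _ _ cu1 cu2 sol.
have U_closure y : U y -> closure U y.
  by move=> Uy r r0; exists y; split => //; rewrite dist_xx.
have cu j : continuous_on U (pair_fun u1 u2 j).
  by apply: continuous_on_sub U_closure _; case: j.
by split; [exact: (visc_solution_locally_lipschitz true Uo cu sol)
          | exact: (visc_solution_locally_lipschitz false Uo cu sol)].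
Qed.
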